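(* Let $\mathcal{N}$ be a cactus network and $u\succcurlyeq v$ vertices of $\mathcal{N}$. Then the union of all directed paths from $u$ to $v$ is a branching path, i.e., there exist $m\ge0$ and vertices $s_1,t_1,\dots,s_m,t_m$ such that this union equals the union of the pieces of the alternating sequence $$u\rightarrow s_1\rightrightarrows t_1\rightarrow s_2\rightrightarrows t_2\rightarrow\cdots\rightarrow s_m\rightrightarrows t_m\rightarrow v,$$ where each $x\rightarrow y$ denotes the unique directed path from $x$ to $y$ (possibly of length $0$; uniqueness being part of the claim), and each $s_j\rightrightarrows t_j$ is a simple branching path.
   Context: A cactus network is a finite directed acyclic graph $\mathcal{N}$ with a unique vertex of indegree $0$ (the root) such that in its underlying undirected graph $\mathcal{N}^\star$ every edge belongs to at most one simple cycle. $u\succcurlyeq v$ means there is a directed path (possibly of length $0$) from $u$ to $v$. A lowest common ancestor of a set $V$ is a vertex $u$ that is an ancestor of all of $V$ with no proper descendant having this property; in a cactus network it is unique. A sink is a vertex of indegree $2$. If $t$ is a sink with parents $p_l,p_r$, its source is the lowest common ancestor $s$ of $\{p_l,p_r\}$; the directed paths from $s$ to $p_l$ and from $s$ to $p_r$ are unique and edge-disjoint, and appending the edges $(p_l,t)$, $(p_r,t)$ gives two paths $P_1,P_2$ from $s$ to $t$. The unordered pair $\{P_1,P_2\}$ (viewed as the union of these two paths) is called a simple branching path, denoted $s\rightrightarrows t$, and $P_1,P_2$ are its branches. *)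

From mathcomp Require Import all_boot.
Set Implicit Arguments. Unset Strict Implicit. Unset Printing Implicit Defensive.

Section Cactus.
Variables (V : finType) (e : rel V).

(* u >= v : a directed path (possibly of length 0) from u to v *)
Definition anc (u v : V) : Prop := connect e u v.

(* p is (the tail of) a directed path from x to y, i.e. x :: p is the vertex sequence *)
Definition dpath (x y : V) (p : seq V) : bool := path e x p && (last x p == y).

Definition pverts (x : V) (p : seq V) : seq V := x :: p.
Definition pedges (x : V) (p : seq V) : seq (V * V) := zip (x :: p) p.

Definition acyclic : Prop := forall x p, path e x p -> last x p = x -> p = [::].

Definition unique_root : Prop :=
  exists r : V, forall v : V, (forall w, ~~ e w v) <-> v = r.

Definition uadj (x y : V) : bool := e x y || e y x.

Definition usimple_cycle (c : seq V) : bool := [&& uniq c, 3 <= size c & cycle uadj c].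

Definition ucedge (c : seq V) (a b : V) : Prop :=
  ((a, b) \in zip c (rot 1 c)) \/ ((b, a) \in zip c (rot 1 c)).

(* every edge of the underlying undirected graph lies on at most one simple cycle
   (two simple cycles sharing an edge have the same edge set, i.e. are the same cycle) *)
Definition cactus_cond : Prop :=
  forall (c1 c2 : seq V) (a b : V), usimple_cycle c1 -> usimple_cycle c2 ->
    ucedge c1 a b -> ucedge c2 a b -> forall x y, ucedge c1 x y <-> ucedge c2 x y.

Definition cactus_network : Prop := acyclic /\ unique_root /\ cactus_cond.

Definition is_lca (a b w : V) : Prop :=
  anc w a /\ anc w b /\ forall w', anc w w' -> w' <> w -> ~ (anc w' a /\ anc w' b).

Definition sink (t : V) : Prop := #|[set w | e w t]| = 2.

Definition simple_branching (s t : V) : Prop :=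
  sink t /\ exists pl pr, [/\ pl <> pr, e pl t, e pr t & is_lca pl pr s].

(* vertices/edges of the union of the two branches of s =>> t
   (the branches are the paths s -> p -> t over the two parents p of t) *)
Definition sbp_vert (s t z : V) : Prop :=
  z = t \/ exists w p, [/\ e w t, dpath s w p & z \in pverts s p].
Definition sbp_edge (s t a b : V) : Prop :=
  exists w p, [/\ e w t, dpath s w p & ((a, b) \in pedges s p \/ (a, b) = (w, t))].

Definition allp_vert (x y z : V) : Prop := exists p, dpath x y p /\ z \in pverts x p.
Definition allp_edge (x y a b : V) : Prop :=
  exists p, dpath x y p /\ (a, b) \in pedges x p.

(* for st = [:: (s1,t1); ...; (sm,tm)], the "->" links
   (u,s1), (t1,s2), ..., (tm,v)   (or (u,v) if m = 0) *)
Definition links (u v : V) (st : seq (V * V)) : seq (V * V) :=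
  zip (u :: map snd st) (rcons (map fst st) v).

End Cactus.

From mathcomp Require Import all_boot.
Set Implicit Arguments. Unset Strict Implicit. Unset Printing Implicit Defensive.

(* Induction on the ancestors of v.  If only one parent w0 of v lies below u, every
   u-v path ends with the edge w0 v, and the decomposition for (u, w0) extends by
   prolonging its last link.  Otherwise take parents w1 <> w2 of v below u.  Two
   paths from a common ancestor to w1 and w2, cut at their last common vertex y,
   close up with the edges w1 v and w2 v into a simple undirected cycle with source y.
   By the cactus condition all such cycles through the edge w1 v have the same edges,
   hence the same source s.  Consequently v has no third parent, s is the lowest
   common ancestor of w1 and w2, and every path from u to w1 or w2 passes through s;
   so the decomposition for (u, s) followed by s =>> v covers all u-v paths. *)

Lemma mem_zip (S T : eqType) (s : seq S) (t : seq T) a b :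
  (a, b) \in zip s t -> a \in s /\ b \in t.
Proof.
elim: s t => [|x s IH] [|y t] //=; rewrite in_cons => /orP [/eqP [-> ->]|/IH [sa tb]].
  by rewrite eqxx in_cons eqxx.
by rewrite sa in_cons tb !orbT.
Qed.

Lemma mem_zip_swap (S T : eqType) (s : seq S) (t : seq T) a b :
  ((a, b) \in zip s t) = ((b, a) \in zip t s).
Proof.
by elim: s t => [|x s IH] [|y t] //=; rewrite !in_cons IH !xpair_eqE [(b == y) && _]andbC.
Qed.

Lemma ex2_mem_rcons (T : eqType) (s : seq T) x (P : T -> Prop) :
  (exists2 y, y \in rcons s x & P y) <-> P x \/ exists2 y, y \in s & P y.
Proof.
split=> [[y]|[Px|[y ys Py]]]; last 2 first.
- by exists x; rewrite ?mem_rcons ?mem_head.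
- by exists y; rewrite // mem_rcons in_cons ys orbT.
by rewrite mem_rcons in_cons => /orP [/eqP -> | ys Py]; [left | right; exists y].
Qed.

Lemma split_at_last (T : eqType) (P : pred T) x s : P x ->
  exists l y r, [/\ x :: s = l ++ y :: r, P y & all (predC P) r].
Proof.
elim/last_ind: s => [|s z IH] Px; first by exists [::], x, [::].
case Pz: (P z); first by exists (x :: s), z, [::]; rewrite cats1.
have [l [y [r [xs Py Pr]]]] := IH Px.
exists l, y, (rcons r z); split=> //; first by rewrite -rcons_cons xs rcons_cat.
by rewrite all_rcons /= Pz.
Qed.

Section Paths.
Variables (V : finType) (e : rel V).

Lemma connect_dpathP x y : reflect (exists p, dpath e x y p) (connect e x y).
Proof.
apply: (iffP connectP) => [[p ep ->]|[p /andP [ep /eqP <-]]]; exists p => //.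
by rewrite /dpath ep eqxx.
Qed.

Lemma last_dpath x y p : dpath e x y p -> last x p = y.
Proof. by case/andP=> _ /eqP. Qed.

Lemma dpath_connect x y p : dpath e x y p -> connect e x y.
Proof. by move=> dp; apply/connect_dpathP; exists p. Qed.

Lemma dpath_cat x y z p q : dpath e x y p -> dpath e y z q -> dpath e x z (p ++ q).
Proof.
by case/andP=> ep /eqP xp /andP [eq yq]; rewrite /dpath cat_path ep last_cat xp eq.
Qed.

Lemma dpath_rcons x w y p : dpath e x w p -> e w y -> dpath e x y (rcons p y).
Proof.
by case/andP=> ep /eqP xp ewy; rewrite /dpath rcons_path ep xp ewy last_rcons eqxx.
Qed.

Lemma dpath_split x y z p : dpath e x y p -> z \in x :: p ->
  exists p1 p2, [/\ p = p1 ++ p2, dpath e x z p1 & dpath e z y p2].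
Proof.
move=> dp zp; case/splitPl: zp dp => p1 p2 zp1 dp; exists p1, p2.
by move: dp; rewrite /dpath cat_path last_cat zp1 eqxx -andbA => /and3P [-> -> ->].
Qed.

Lemma dpath_suffix x y p l z r : dpath e x y p -> x :: p = l ++ z :: r -> dpath e z y r.
Proof.
case: l => [|x' l] /= dp []; first by move=> <- <-.
move=> _ ep; move: dp; rewrite ep /dpath cat_path last_cat /= -!andbA.
by case/and4P=> _ _ -> ->.
Qed.

Lemma mem_dpath_connect x y z p : dpath e x y p -> z \in x :: p ->
  connect e x z /\ connect e z y.
Proof.
move=> dp /(dpath_split dp) [p1 [p2 [_ d1 d2]]].
by split; [apply: dpath_connect d1 | apply: dpath_connect d2].
Qed.

Lemma dpath_last_edge x y p : dpath e x y p -> x <> y ->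
  exists w p', [/\ p = rcons p' y, e w y & dpath e x w p'].
Proof.
case/lastP: p => [/andP [_ /eqP /= <-] /(_ erefl) [] | p z].
case/andP; rewrite rcons_path last_rcons => /andP [ep ez] /eqP <- _.
by exists (last x p), p; rewrite /dpath ep eqxx.
Qed.

Lemma pedges_cons (x y : V) p : pedges x (y :: p) = (x, y) :: pedges y p.
Proof. by []. Qed.

Lemma path_pedges (x : V) p : path e x p = all (fun ab => e ab.1 ab.2) (pedges x p).
Proof. by elim: p x => // y p IH x; rewrite pedges_cons /= IH. Qed.

Lemma pedges_cat (x : V) p q : pedges x (p ++ q) = pedges x p ++ pedges (last x p) q.
Proof. by elim: p x => // y p IH x; rewrite cat_cons !pedges_cons IH. Qed.

Lemma pedges_rcons (x y : V) p : pedges x (rcons p y) = rcons (pedges x p) (last x p, y).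
Proof. by rewrite -cats1 pedges_cat cats1. Qed.

Lemma pedges_rconsE (x y : V) p : pedges x (rcons p y) = zip (x :: p) (rcons p y).
Proof. by elim: p x => // z p IH x; rewrite rcons_cons pedges_cons IH. Qed.

Lemma mem_pedges (x : V) p a b : (a, b) \in pedges x p -> a \in x :: p /\ b \in x :: p.
Proof. by case/mem_zip=> -> bp; rewrite in_cons bp orbT. Qed.

Lemma mem_pedges_dpath x y p a b : dpath e x y p -> (a, b) \in pedges x p ->
  [/\ e a b, connect e x a & connect e x b].
Proof.
move=> dp ab; have [ax bx] := mem_pedges ab.
split; [|exact: (mem_dpath_connect dp ax).1 | exact: (mem_dpath_connect dp bx).1].
by move: (andP dp).1; rewrite path_pedges => /allP /(_ _ ab).
Qed.

Lemma pedges_rcons_last (x : V) p y b : y \notin x :: p ->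
  (b, y) \in pedges x (rcons p y) -> b = last x p.
Proof.
move=> yp; rewrite pedges_rcons mem_rcons in_cons => /orP [/eqP [] // | /mem_pedges [_]].
by rewrite (negbTE yp).
Qed.

Lemma pverts_cat (x : V) p q z :
  (z \in pverts x (p ++ q)) = (z \in pverts x p) || (z \in pverts (last x p) q).
Proof.
rewrite /pverts !in_cons mem_cat; have := mem_last x p; rewrite in_cons.
by case: (z =P last x p) => [-> /orP [] -> | _ _]; rewrite ?orbT ?orbA.
Qed.

Lemma pverts_rcons (x y : V) p z : (z \in pverts x (rcons p y)) = (z == y) || (z \in pverts x p).
Proof. by rewrite /pverts -rcons_cons mem_rcons in_cons. Qed.

End Paths.

Section Acyclic.
Variables (V : finType) (e : rel V).
Hypothesis acy : acyclic e.

Lemma dpath_loop x p : dpath e x x p -> p = [::].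
Proof. by case/andP=> ep /eqP; apply: acy. Qed.

Lemma connect_antisym x y : connect e x y -> connect e y x -> x = y.
Proof.
move=> /connect_dpathP [p dp] /connect_dpathP [q dq].
by case: p dp (dpath_loop (dpath_cat dp dq)) => [/andP [_ /eqP]|].
Qed.

Lemma connect_edge_back x y : connect e x y -> e y x -> False.
Proof.
by move=> /connect_dpathP [p dp] /(dpath_rcons dp) /dpath_loop; case: p {dp}.
Qed.

Lemma edge_neq x y : e x y -> x <> y.
Proof. by move=> exy xy; subst; apply: connect_edge_back exy. Qed.

Lemma path_uniq x p : path e x p -> uniq (x :: p).
Proof.
elim: p x => //= y p IH x /andP [exy ep]; rewrite IH // andbT.
apply/negP => xp; have dp : dpath e y (last y p) p by rewrite /dpath ep eqxx.
by have [yx _] := mem_dpath_connect dp xp; apply: connect_edge_back yx exy.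
Qed.

Lemma card_anc_lt x y : connect e x y -> x <> y ->
  #|[set z | connect e z x]| < #|[set z | connect e z y]|.
Proof.
move=> xy neq; apply: proper_card; apply/properP; split.
  by apply/subsetP => z; rewrite !inE => /connect_trans; apply.
exists y; rewrite !inE ?connect0 //.
by apply/negP => /(connect_antisym xy).
Qed.

Lemma unique_root_connect : unique_root e -> exists r, forall z, connect e r z.
Proof.
case=> r root; exists r => z.
pose nanc x := #|[set y | connect e y x]|.
case: (arg_minnP (P := connect e^~ z) nanc (connect0 e z)) => a az amin.
suff ar : a = r by rewrite -ar.
apply/(root a).1 => w; apply/negP => ewa.
have := amin w (connect_trans (connect1 ewa) az).
by rewrite leqNgt card_anc_lt ?connect1 //; apply: edge_neq.
Qed.

End Acyclic.

Section BranchCycle.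
Variables (V : finType) (e : rel V).
Hypothesis acy : acyclic e.

Record branch_cycle (c : seq V) (y w1 w2 v : V) : Prop := BranchCycle {
  branch_cycle_simple : usimple_cycle e c;
  branch_cycle_left : ucedge c w1 v;
  branch_cycle_right : ucedge c w2 v;
  branch_cycle_sink : forall b, ucedge c v b -> b = w1 \/ b = w2;
  branch_cycle_source : exists b, ucedge c y b;
  branch_cycle_below : forall z b, ucedge c z b -> z = v \/ connect e y z }.

Lemma ucedgeC (c : seq V) a b : ucedge c a b -> ucedge c b a.
Proof. by case; [right | left]. Qed.

Lemma dpath_rcons_notin x w y p : dpath e x w p -> e w y -> y \notin x :: p.
Proof.
by move=> dp ewy; apply/negP => /(mem_dpath_connect dp) [_ /connect_edge_back]; apply.
Qed.

Lemma ucedge_branch_cycle (y v : V) S1 S2 a b :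
  let E := pedges y (rcons S1 v) ++ pedges y (rcons S2 v) in
  ucedge (y :: S1 ++ v :: rev S2) a b <-> (a, b) \in E \/ (b, a) \in E.
Proof.
have rotE : rot 1 (y :: S1 ++ v :: rev S2) = rcons S1 v ++ rcons (rev S2) y.
  by rewrite rot1_cons rcons_cat cat_rcons.
have zipE : zip (y :: S1 ++ v :: rev S2) (rot 1 (y :: S1 ++ v :: rev S2)) =
            pedges y (rcons S1 v) ++ zip (v :: rev S2) (rcons (rev S2) y).
  by rewrite rotE -cat_cons zip_cat ?size_rcons // pedges_rconsE.
have revE a' b' : ((a', b') \in zip (v :: rev S2) (rcons (rev S2) y)) =
                  ((b', a') \in pedges y (rcons S2 v)).
  by rewrite mem_zip_swap pedges_rconsE -mem_rev rev_zip ?size_rcons // rev_rcons rev_cons revK.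
rewrite /ucedge zipE !mem_cat !revE.
by split; case=> /orP [] ->; rewrite ?orbT; by [left | right].
Qed.

Lemma mem_pedges_sink_in y w v S b : dpath e y w S -> e w v ->
  ((b, v) \in pedges y (rcons S v)) = (b == w).
Proof.
move=> dS ewv; rewrite -(last_dpath dS).
apply/idP/eqP => [/(pedges_rcons_last (dpath_rcons_notin dS ewv)) // | ->].
by rewrite pedges_rcons mem_rcons mem_head.
Qed.

Lemma mem_pedges_sink_out y w v S b : dpath e y w S -> e w v ->
  ((v, b) \in pedges y (rcons S v)) = false.
Proof.
move=> dS ewv; apply: negbTE; apply: contra (dpath_rcons_notin dS ewv).
by rewrite pedges_rconsE => /mem_zip [].
Qed.

Lemma uniq_branch_cycle y wa wb v S1 S2 :
  dpath e y wa S1 -> dpath e y wb S2 -> e wa v -> e wb v ->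
  {in S1, forall z, z \notin S2} -> uniq (y :: S1 ++ v :: rev S2).
Proof.
move=> d1 d2 eav ebv disj.
rewrite -cat_cons cat_uniq (path_uniq acy (andP d1).1) /= rev_uniq mem_rev.
have /= /andP [yS2 ->] := path_uniq acy (andP d2).1.
rewrite (negbTE (dpath_rcons_notin d1 eav)) andbT /=.
move: (dpath_rcons_notin d2 ebv); rewrite in_cons negb_or => /andP [_ ->].
rewrite andbT; apply/hasPn => z; rewrite mem_rev => zS2; rewrite /= in_cons negb_or.
apply/andP; split; first by apply: contraNneq yS2 => <-.
by apply: contraL zS2 => /disj.
Qed.

Lemma branch_cycle_of_paths y wa wb v S1 S2 :
  dpath e y wa S1 -> dpath e y wb S2 -> wa <> wb -> e wa v -> e wb v ->
  {in S1, forall z, z \notin S2} -> branch_cycle (y :: S1 ++ v :: rev S2) y wa wb v.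
Proof.
move=> d1 d2 neq eav ebv disj; set c := y :: _.
have cE a b := ucedge_branch_cycle y v S1 S2 a b.
have edgeE a b : (a, b) \in pedges y (rcons S1 v) ++ pedges y (rcons S2 v) ->
    [/\ e a b, connect e y a & connect e y b].
  rewrite mem_cat => /orP [] ab.
    exact: mem_pedges_dpath (dpath_rcons d1 eav) ab.
  exact: mem_pedges_dpath (dpath_rcons d2 ebv) ab.
split.
- apply/and3P; split; first exact: uniq_branch_cycle d1 d2 eav ebv disj.
  + rewrite /c /= size_cat /= size_rev addnS !ltnS lt0n addn_eq0.
    apply/negP => /andP [/nilP S1nil /nilP S2nil]; apply: neq.
    by rewrite -(last_dpath d1) -(last_dpath d2) S1nil S2nil.
  + rewrite /c /cycle path_pedges pedges_rconsE -rot1_cons; apply/allP => -[a b] ab.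
    have /cE [/edgeE [eab _ _] | /edgeE [eba _ _]] : ucedge c a b by left.
      by rewrite /= /uadj eab.
    by rewrite /= /uadj eba orbT.
- by apply/cE; left; rewrite mem_cat (mem_pedges_sink_in _ d1 eav) eqxx.
- by apply/cE; left; rewrite mem_cat (mem_pedges_sink_in _ d2 ebv) eqxx orbT.
- move=> b /cE; rewrite !mem_cat (mem_pedges_sink_out _ d1 eav) (mem_pedges_sink_out _ d2 ebv).
  rewrite (mem_pedges_sink_in _ d1 eav) (mem_pedges_sink_in _ d2 ebv) /=.
  by case=> // /orP [] /eqP ->; [left | right].
- have [h yh] : exists h, (y, h) \in pedges y (rcons S1 v).
    by case: (S1) => [|h t]; [exists v | exists h]; rewrite pedges_rconsE mem_head.
  by exists h; apply/cE; left; rewrite mem_cat yh.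
- by move=> z b /cE [/edgeE [] | /edgeE []]; right.
Qed.

Lemma exists_branch_cycle a wa wb v q1 q2 :
  dpath e a wa q1 -> dpath e a wb q2 -> wa <> wb -> e wa v -> e wb v ->
  exists c y, branch_cycle c y wa wb v /\ y \in a :: q1.
Proof.
move=> d1 d2 neq eav ebv.
have [l [y [S1 [q1E yq2 S1q2]]]] :=
  split_at_last (P := fun z => z \in a :: q2) q1 (mem_head a q2).
have [p [S2 [q2E _ d2']]] := dpath_split d2 yq2.
exists (y :: S1 ++ v :: rev S2), y; split; last by rewrite q1E mem_cat mem_head orbT.
apply: branch_cycle_of_paths (dpath_suffix d1 q1E) d2' neq eav ebv _.
move=> z /(allP S1q2) /=; apply: contra => zS2.
by rewrite q2E in_cons mem_cat zS2 !orbT.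
Qed.

End BranchCycle.

Section Cactus.
Variables (V : finType) (e : rel V).
Hypotheses (acy : acyclic e) (root : unique_root e) (cc : cactus_cond e).

Lemma branch_cycleC c y w1 w2 v : branch_cycle e c y w1 w2 v -> branch_cycle e c y w2 w1 v.
Proof. by case=> ? ? ? sink ? ?; split=> // b /sink []; by [right | left]. Qed.

Lemma branch_cycle_source_connect c y w1 w2 v :
  branch_cycle e c y w1 w2 v -> e w1 v -> connect e y w1.
Proof.
case=> _ w1v _ _ _ below ew1v.
by case: (below _ _ w1v) => // w1vE; case: (edge_neq acy ew1v).
Qed.

Lemma branch_cycle_source_below c1 c2 y1 y2 w1 w2 w3 v :
  branch_cycle e c1 y1 w1 w2 v -> branch_cycle e c2 y2 w1 w3 v -> e w1 v -> connect e y2 y1.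
Proof.
move=> C1 C2 ew1v; have [b y1b] := branch_cycle_source C1.
have E := cc (branch_cycle_simple C1) (branch_cycle_simple C2)
             (branch_cycle_left C1) (branch_cycle_left C2).
case: (branch_cycle_below C2 ((E y1 b).1 y1b)) => // y1v.
by case: (connect_edge_back acy (branch_cycle_source_connect C1 ew1v)); rewrite y1v.
Qed.

Lemma branch_cycle_source_unique c1 c2 y1 y2 w1 w2 w3 v :
  branch_cycle e c1 y1 w1 w2 v -> branch_cycle e c2 y2 w1 w3 v -> e w1 v -> y1 = y2.
Proof.
move=> C1 C2 ew1v.
by apply: (connect_antisym acy);
  [apply: (branch_cycle_source_below C2 C1) | apply: (branch_cycle_source_below C1 C2)].
Qed.

Lemma cactus_sink_parents w1 w2 w v :
  w1 <> w2 -> e w1 v -> e w2 v -> e w v -> w = w1 \/ w = w2.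
Proof.
move=> neq ew1v ew2v ewv; case: (w =P w1) => [|w1w]; first by left.
have [r rz] := unique_root_connect acy root.
have rpath x : exists p, dpath e r x p by apply/connect_dpathP.
have [p1 d1] := rpath w1; have [p2 d2] := rpath w2; have [p dp] := rpath w.
have [c [y [C _]]] := exists_branch_cycle acy d1 d2 neq ew1v ew2v.
have [c' [y' [C' _]]] := exists_branch_cycle acy d1 dp (nesym w1w) ew1v ewv.
have E := cc (branch_cycle_simple C) (branch_cycle_simple C')
             (branch_cycle_left C) (branch_cycle_left C').
have /(branch_cycle_sink C') [w2w1 | ->] := (E v w2).1 (ucedgeC (branch_cycle_right C)).
  by case: neq.
by right.
Qed.

Lemma branch_cycle_source_on_path c s w1 w2 v a p :
  branch_cycle e c s w1 w2 v -> e w1 v -> e w2 v -> w1 <> w2 ->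
  dpath e a w1 p -> connect e a w2 -> s \in a :: p.
Proof.
move=> C ew1v ew2v neq dp /connect_dpathP [q dq].
have [c' [y [C' yp]]] := exists_branch_cycle acy dp dq neq ew1v ew2v.
by rewrite (branch_cycle_source_unique C C' ew1v).
Qed.

Lemma branch_cycle_source_lca c s w1 w2 v :
  branch_cycle e c s w1 w2 v -> e w1 v -> e w2 v -> w1 <> w2 -> is_lca e w1 w2 s.
Proof.
move=> C ew1v ew2v neq; rewrite /is_lca /anc; split; [|split].
- exact: branch_cycle_source_connect C ew1v.
- exact: branch_cycle_source_connect (branch_cycleC C) ew2v.
move=> w sw ws [/connect_dpathP [p dp] ww2].
have /(mem_dpath_connect dp) [ws' _] := branch_cycle_source_on_path C ew1v ew2v neq dp ww2.
by apply: ws; apply: (connect_antisym acy ws' sw).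
Qed.

Lemma cactus_simple_branching u w1 w2 v :
  connect e u w1 -> connect e u w2 -> w1 <> w2 -> e w1 v -> e w2 v ->
  exists s, [/\ simple_branching e s v, connect e u s &
                forall w p, e w v -> dpath e u w p -> s \in u :: p].
Proof.
move=> uw1 uw2 neq ew1v ew2v.
have [p1 d1] := connect_dpathP _ _ _ uw1; have [p2 d2] := connect_dpathP _ _ _ uw2.
have [c [s [C sp1]]] := exists_branch_cycle acy d1 d2 neq ew1v ew2v.
have parents := cactus_sink_parents neq ew1v ew2v.
exists s; split.
- split; last by exists w1, w2; split; last exact: branch_cycle_source_lca C ew1v ew2v neq.
  rewrite /sink; suff -> : [set w | e w v] = [set w1; w2] by rewrite cards2 (introN eqP neq).
  by apply/setP => w; rewrite !inE; apply/idP/orP => [/parents [] -> | [] /eqP ->];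
    by [left | right |].
- exact: (mem_dpath_connect d1 sp1).1.
- move=> w p /parents [] -> dp.
  + exact: branch_cycle_source_on_path C ew1v ew2v neq dp uw2.
  + exact: branch_cycle_source_on_path (branch_cycleC C) ew2v ew1v (nesym neq) dp uw1.
Qed.

End Cactus.

Lemma links_last (V : finType) (u v : V) st :
  links u v st = rcons (zip (belast u (map snd st)) (map fst st)) (last u (map snd st), v).
Proof. by rewrite /links lastI zip_rcons // size_belast !size_map. Qed.

Lemma links_rcons (V : finType) (u s t v : V) st :
  links u v (rcons st (s, t)) = rcons (links u s st) (t, v).
Proof. by rewrite /links !map_rcons -rcons_cons zip_rcons //= size_rcons !size_map. Qed.

Section Covering.
Variables (V : finType) (X : Type) (whole piece : V -> V -> X -> Prop).

(* [whole x y] is the union of all x-y paths and [piece s t] that of the two branches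
   of s =>> t, both read either as sets of vertices or as sets of edges. *)
Definition covered (u v : V) (st : seq (V * V)) : Prop :=
  forall z, whole u v z <->
    (exists2 l, l \in links u v st & whole l.1 l.2 z) \/
    (exists2 q, q \in st & piece q.1 q.2 z).

Lemma covered_nil u v : covered u v [::].
Proof.
move=> z; split=> [uvz | [[l] | [q //]]]; first by left; exists (u, v); rewrite ?mem_head.
by rewrite /links /= in_cons orbF => /eqP ->.
Qed.

Lemma covered_extend u w v st (E : X -> Prop) (t := last u (map snd st)) :
  covered u w st ->
  (forall z, whole u v z <-> E z \/ whole u w z) ->
  (forall z, whole t v z <-> E z \/ whole t w z) ->
  covered u v st.
Proof.
rewrite /covered !links_last -/t; set K := zip _ _ => cov Hu Ht z.
move: (cov z) (Hu z) (Ht z).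
move: (ex2_mem_rcons K (t, v) (fun l => whole l.1 l.2 z)).
move: (ex2_mem_rcons K (t, w) (fun l => whole l.1 l.2 z)).
rewrite /=; tauto.
Qed.

Lemma covered_branch u s v st : covered u s st ->
  (forall z, whole u v z <-> whole u s z \/ piece s v z) ->
  (forall z, whole v v z -> piece s v z) ->
  covered u v (rcons st (s, v)).
Proof.
rewrite /covered links_rcons => cov Hv Hvv z.
move: (cov z) (Hv z) (Hvv z).
move: (ex2_mem_rcons (links u s st) (v, v) (fun l => whole l.1 l.2 z)).
move: (ex2_mem_rcons st (s, v) (fun q => piece q.1 q.2 z)).
rewrite /=; tauto.
Qed.

End Covering.

Section PathSets.
Variables (V : finType) (e : rel V).

Section UniqueParent.
Variables (x w v : V).
Hypotheses (acy : acyclic e) (xw : connect e x w) (ewv : e w v).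
Hypothesis parent_unique : forall w', e w' v -> connect e x w' -> w' = w.

Lemma dpath_unique_parent p :
  dpath e x v p <-> exists2 p', p = rcons p' v & dpath e x w p'.
Proof.
split=> [dp | [p' -> dp']]; last exact: dpath_rcons dp' ewv.
have xv : x <> v by move=> xvE; apply: (connect_edge_back acy xw); rewrite xvE.
have [w' [p' [-> ew'v dp']]] := dpath_last_edge dp xv.
by exists p'; rewrite // -(parent_unique ew'v (dpath_connect dp')).
Qed.

Lemma allp_vert_parent z : allp_vert e x v z <-> z = v \/ allp_vert e x w z.
Proof.
split=> [[p [/dpath_unique_parent [p' -> dp'] xz]] | [-> | [p' [dp' xz]]]].
- by move: xz; rewrite pverts_rcons => /orP [/eqP -> | xz]; [left | right; exists p'].
- have [p dp] := connect_dpathP _ _ _ xw.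
  by exists (rcons p v); rewrite pverts_rcons eqxx (dpath_rcons dp).
- by exists (rcons p' v); rewrite pverts_rcons xz orbT (dpath_rcons dp').
Qed.

Lemma allp_edge_parent a b :
  allp_edge e x v a b <-> (a, b) = (w, v) \/ allp_edge e x w a b.
Proof.
split=> [[p [/dpath_unique_parent [p' -> dp'] xab]] | [abE | [p' [dp' xab]]]].
- move: xab; rewrite pedges_rcons mem_rcons in_cons (last_dpath dp').
  by case/orP=> [/eqP -> | xab]; [left | right; exists p'].
- have [p dp] := connect_dpathP _ _ _ xw.
  exists (rcons p v); rewrite (dpath_rcons dp) //.
  by rewrite pedges_rcons mem_rcons (last_dpath dp) abE mem_head.
- by exists (rcons p' v); rewrite pedges_rcons mem_rcons in_cons xab orbT (dpath_rcons dp').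
Qed.

Lemma unique_dpath_parent : (exists! p, dpath e x w p) -> exists! p, dpath e x v p.
Proof.
case=> p [dp pu]; exists (rcons p v); split; first exact: dpath_rcons dp ewv.
by move=> q /dpath_unique_parent [q' -> /pu ->].
Qed.

End UniqueParent.

Section Branch.
Variables (u s v : V).
Hypotheses (us : connect e u s) (sv : connect e s v) (uv : u <> v).
Hypothesis through : forall w p, e w v -> dpath e u w p -> s \in u :: p.

Lemma dpath_through_source p : dpath e u v p <->
  exists w p1 p2, [/\ p = rcons (p1 ++ p2) v, e w v, dpath e u s p1 & dpath e s w p2].
Proof.
split=> [dp | [w [p1 [p2 [-> ewv d1 d2]]]]]; last exact: dpath_rcons (dpath_cat d1 d2) ewv.
have [w [p' [-> ewv dp']]] := dpath_last_edge dp uv.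
have [p1 [p2 [-> d1 d2]]] := dpath_split dp' (through ewv dp').
by exists w, p1, p2.
Qed.

Lemma allp_vert_branch z : allp_vert e u v z <-> allp_vert e u s z \/ sbp_vert e s v z.
Proof.
have [pu du] := connect_dpathP _ _ _ us; have [q dq] := connect_dpathP _ _ _ sv.
split=> [[p [/dpath_through_source [w [p1 [p2 [-> ewv d1 d2]]]] zp]] |
         [[p1 [d1 zp]] | [-> | [w [p2 [ewv d2 zp]]]]]].
- move: zp; rewrite pverts_rcons pverts_cat (last_dpath d1).
  case/orP=> [/eqP -> | /orP [zp1 | zp2]]; first by right; left.
    by left; exists p1.
  by right; right; exists w, p2.
- by exists (p1 ++ q); rewrite pverts_cat zp (dpath_cat d1 dq).
- exists (pu ++ q); split; first exact: dpath_cat du dq.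
  by rewrite -{1}(last_dpath (dpath_cat du dq)); apply: mem_last.
- exists (pu ++ rcons p2 v); split; first exact: dpath_cat du (dpath_rcons d2 ewv).
  by rewrite pverts_cat (last_dpath du) pverts_rcons zp !orbT.
Qed.

Lemma allp_edge_branch a b :
  allp_edge e u v a b <-> allp_edge e u s a b \/ sbp_edge e s v a b.
Proof.
have [pu du] := connect_dpathP _ _ _ us; have [q dq] := connect_dpathP _ _ _ sv.
split=> [[p [/dpath_through_source [w [p1 [p2 [-> ewv d1 d2]]]] abp]] |
         [[p1 [d1 abp]] | [w [p2 [ewv d2 abp]]]]].
- move: abp; rewrite pedges_rcons mem_rcons in_cons pedges_cat mem_cat last_cat.
  rewrite (last_dpath d1) (last_dpath d2).
  case/orP=> [/eqP abE | /orP [abp1 | abp2]].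
  + by right; exists w, p2; split=> //; right.
  + by left; exists p1.
  + by right; exists w, p2; split=> //; left.
- by exists (p1 ++ q); rewrite pedges_cat mem_cat abp (dpath_cat d1 dq).
- exists (pu ++ rcons p2 v); split; first exact: dpath_cat du (dpath_rcons d2 ewv).
  rewrite pedges_cat mem_cat (last_dpath du) pedges_rcons mem_rcons in_cons (last_dpath d2).
  by case: abp => [-> | ->]; rewrite ?eqxx !orbT.
Qed.

End Branch.
End PathSets.

Section Decomposition.
Variables (V : finType) (e : rel V).
Hypothesis acy : acyclic e.

Definition branching_decomposition (u v : V) (st : seq (V * V)) : Prop :=
  [/\ forall x y, (x, y) \in links u v st -> exists! p, dpath e x y p,
      forall s t, (s, t) \in st -> simple_branching e s t,
      covered (allp_vert e) (sbp_vert e) u v st &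
      covered (fun x y ab => allp_edge e x y ab.1 ab.2)
              (fun s t ab => sbp_edge e s t ab.1 ab.2) u v st].

Lemma unique_dpath_refl v : exists! p, dpath e v v p.
Proof.
by exists [::]; split=> [|p /(dpath_loop acy) ->]; rewrite // /dpath /= eqxx.
Qed.

Lemma decomposition_refl u : branching_decomposition u u [::].
Proof.
split=> //; try exact: covered_nil.
by move=> x y; rewrite /links /= in_cons orbF => /eqP [-> ->]; apply: unique_dpath_refl.
Qed.

Lemma decomposition_extend u w v st : branching_decomposition u w st -> e w v ->
  (forall w', e w' v -> connect e u w' -> w' = w) -> branching_decomposition u v st.
Proof.
case=> U B CV CE ewv parent_unique; set t := last u (map snd st).
have twE : (t, w) \in links u w st by rewrite links_last mem_rcons mem_head.
have [p [tp _]] := U _ _ twE.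
have tw := dpath_connect tp.
have ut : connect e u t.
  have [q [uq tq]] : allp_vert e u w t.
    by apply/(CV t); left; exists (t, w) => //; exists p; rewrite /pverts mem_head.
  exact: (mem_dpath_connect uq tq).1.
have uw : connect e u w := connect_trans ut tw.
have parent_unique_t w' : e w' v -> connect e t w' -> w' = w.
  by move=> ew'v tw'; apply: parent_unique ew'v (connect_trans ut tw').
split=> //.
- move=> x y; rewrite links_last mem_rcons in_cons => /orP [/eqP [-> ->] | xy].
    exact: unique_dpath_parent acy tw ewv parent_unique_t (U _ _ twE).
  by apply: U; rewrite links_last mem_rcons in_cons xy orbT.
- apply: (covered_extend (E := eq^~ v) CV) => z.
    exact: allp_vert_parent acy uw ewv parent_unique z.
  exact: allp_vert_parent acy tw ewv parent_unique_t z.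
- apply: (covered_extend (E := fun ab => (ab.1, ab.2) = (w, v)) CE) => z.
    exact: allp_edge_parent acy uw ewv parent_unique z.1 z.2.
  exact: allp_edge_parent acy tw ewv parent_unique_t z.1 z.2.
Qed.

Lemma decomposition_branch u s v st : branching_decomposition u s st ->
  simple_branching e s v -> connect e u s ->
  (forall w p, e w v -> dpath e u w p -> s \in u :: p) ->
  branching_decomposition u v (rcons st (s, v)).
Proof.
case=> U B CV CE sbr us through.
have [_ [w1 [_ [_ ew1v _ [sw1 _]]]]] := sbr.
have sv : connect e s v := connect_trans sw1 (connect1 ew1v).
have uv : u <> v.
  by move=> uvE; apply: (connect_edge_back acy (connect_trans us sw1)); rewrite uvE.
split.
- move=> x y; rewrite links_rcons mem_rcons in_cons => /orP [/eqP [-> ->] | xy].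
    exact: unique_dpath_refl.
  exact: U.
- by move=> s' t; rewrite mem_rcons in_cons => /orP [/eqP [-> ->] | /B].
- apply: covered_branch CV _ _ => [z | z [p [/(dpath_loop acy) -> /=]]].
    exact: allp_vert_branch us sv uv through z.
  by rewrite in_cons orbF => /eqP ->; left.
- apply: covered_branch CE _ _ => [ab | ab [p [/(dpath_loop acy) ->]]] //.
  exact: allp_edge_branch us sv uv through ab.1 ab.2.
Qed.

End Decomposition.

Lemma branching_decomposition_exists (V : finType) (e : rel V) (u v : V) :
  cactus_network e -> connect e u v -> exists st, branching_decomposition e u v st.
Proof.
case=> acy [root cc]; have [n] := ubnP #|[set x | connect e x v]|.
elim: n v => // n IH v vn uv.
case: (u =P v) => [<- | uv']; first by exists [::]; apply: decomposition_refl.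
have [p up] := connect_dpathP _ _ _ uv; have [w0 [p0 [_ ew0v up0]]] := dpath_last_edge up uv'.
have uw0 := dpath_connect up0.
have smaller x : connect e x v -> x <> v -> #|[set y | connect e y x]| < n.
  by move=> xv xv'; apply: leq_trans (card_anc_lt acy xv xv') _; rewrite -ltnS.
case: (pickP [pred w | (w != w0) && e w v && connect e u w]) => [w | none].
- move=> /andP [/andP [/eqP ww0 ewv] uw].
  have [s [sbr us through]] := cactus_simple_branching acy root cc uw uw0 ww0 ewv ew0v.
  have /(mem_dpath_connect up0) [_ sw0] := through _ _ ew0v up0.
  have sv := connect_trans sw0 (connect1 ew0v).
  have sv' : s <> v by move=> svE; apply: (connect_edge_back acy sw0); rewrite svE.
  have [st dec] := IH s (smaller s sv sv') us.
  by exists (rcons st (s, v)); apply: decomposition_branch.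
- have [st dec] := IH w0 (smaller w0 (connect1 ew0v) (edge_neq acy ew0v)) uw0.
  exists st; apply: decomposition_extend dec ew0v _ => // w ewv uw.
  by apply/eqP; move: (none w) => /=; rewrite ewv uw !andbT => /negbT; rewrite negbK.
Qed.

Unset Implicit Arguments.

Theorem lemma6 (V : finType) (e : rel V) (u v : V) :
  cactus_network e -> anc e u v ->
  exists st : seq (V * V),
    (forall x y, (x, y) \in links u v st -> exists! p, dpath e x y p) /\
    (forall s t, (s, t) \in st -> simple_branching e s t) /\
    (forall z, allp_vert e u v z <->
       (exists2 l, l \in links u v st & allp_vert e l.1 l.2 z) \/
       (exists2 q, q \in st & sbp_vert e q.1 q.2 z)) /\
    (forall a b, allp_edge e u v a b <->
       (exists2 l, l \in links u v st & allp_edge e l.1 l.2 a b) \/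
       (exists2 q, q \in st & sbp_edge e q.1 q.2 a b)).
Proof.
move=> cn uv; have [st [U B CV CE]] := branching_decomposition_exists cn uv.
by exists st; do 3!split=> //; move=> a b; apply: (CE (a, b)).
Qed.
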